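(* Let $F$ be the elementary cellular automaton with rule number 13, or the one with rule number 29. For every nonempty finite word $u\in\{0,1\}^*$, the deterministic communication complexity of $\textsc{SInv}_{F,u}$ restricted to inputs of length $n$ is bounded by a constant independent of $n$.
   Context: An elementary cellular automaton (ECA) with rule number $N\in\{0,\dots,255\}$ is the map $F:\{0,1\}^{\mathbb Z}\to\{0,1\}^{\mathbb Z}$ given by $F(x)_i=f(x_{i-1},x_i,x_{i+1})$. Here the local rule $f:\{0,1\}^3\to\{0,1\}$ is determined by $N=\sum_{a,b,c\in\{0,1\}}2^{4a+2b+c}f(a,b,c)$. For a nonempty finite word $u$, $p_u\in\{0,1\}^{\mathbb Z}$ is defined by $(p_u)_i=u_{i\bmod |u|}$. For a finite word $x$, $p_u[x]$ is the configuration equal to $x$ on positions $0,\dots,|x|-1$ and to $p_u$ elsewhere. $\textsc{SInv}_{F,u}$ is the decision problem: on input a finite word $x$, decide whether there is an integer $w$ such that for all $t\ge0$ the set of positions where $F^t(p_u)$ and $F^t(p_u[x])$ differ is contained in an interval of length $w$. For each $n$, it is regarded as a function $\{0,1\}^n\to\{0,1\}$. For a function $g:X\times Y\to Z$, $D(g)$ is the minimal depth of a deterministic two-party protocol computing $g$. In such a protocol, Alice knows $x$ and Bob knows $y$. The protocol is a binary tree: each internal node is labelled by a function of Alice's input only or of Bob's input only, with values in $\{\text{left},\text{right}\}$, and each leaf is labelled by an output value. For $g:\{0,1\}^m\to Z$, set $D(g)=\max_{0\le i<m}D(g_i)$, where $g_i:\{0,1\}^i\times\{0,1\}^{m-i}\to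 Z$ is $g_i(x,y)=g(xy)$. *)

From Stdlib Require Import ZArith ClassicalEpsilon.
From mathcomp Require Import all_boot.
Set Implicit Arguments. Unset Strict Implicit. Unset Printing Implicit Defensive.

Definition config := Z -> bool.

Definition eca_local (N : nat) (a b c : bool) : bool :=
  Nat.testbit N (4 * nat_of_bool a + 2 * nat_of_bool b + nat_of_bool c).

Definition eca (N : nat) (x : config) : config :=
  fun i => eca_local N (x (i - 1)%Z) (x i) (x (i + 1)%Z).

Definition eca_iter (N t : nat) (x : config) : config := iter t (eca N) x.

Definition periodic (u : seq bool) : config :=
  fun i => nth false u (Z.to_nat (Z.modulo i (Z.of_nat (size u)))).

Definition patch (u x : seq bool) : config :=
  fun i => if ((0 <=? i)%Z && (i <? Z.of_nat (size x))%Z)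
           then nth false x (Z.to_nat i) else periodic u i.

Definition SInv (N : nat) (u x : seq bool) : Prop :=
  exists w : Z, forall t : nat, exists a : Z, forall i : Z,
    eca_iter N t (periodic u) i <> eca_iter N t (patch u x) i ->
    (a <= i < a + w)%Z.

Definition SInv_b (N : nat) (u x : seq bool) : bool :=
  if excluded_middle_informative (SInv N u x) then true else false.

Inductive protocol (X Y Z : Type) : Type :=
| Leaf : Z -> protocol X Y Z
| NodeA : (X -> bool) -> protocol X Y Z -> protocol X Y Z -> protocol X Y Z
| NodeB : (Y -> bool) -> protocol X Y Z -> protocol X Y Z -> protocol X Y Z.
(* convention: function value true = left, false = right *)

Fixpoint run (X Y Z : Type) (P : protocol X Y Z) (x : X) (y : Y) : Z :=
  match P with
  | Leaf z => z
  | NodeA f l r => if f x then run l x y else run r x y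
  | NodeB f l r => if f y then run l x y else run r x y
  end.

Fixpoint depth (X Y Z : Type) (P : protocol X Y Z) : nat :=
  match P with
  | Leaf _ => 0
  | NodeA _ l r => (maxn (depth l) (depth r)).+1
  | NodeB _ l r => (maxn (depth l) (depth r)).+1
  end.

Definition CC_le (X Y Z : Type) (h : X -> Y -> Z) (d : nat) : Prop :=
  exists P : protocol X Y Z, depth P <= d /\ forall x y, run P x y = h x y.

(* For g : {0,1}^m -> Z (given as a function on words, used on words of
   length m), D(g) = max_{0<=i<m} D(g_i) with g_i(x,y) = g(xy). *)
Definition CC_len_le (Z : Type) (m : nat) (g : seq bool -> Z) (d : nat) : Prop :=
  forall i : nat, i < m ->
    CC_le (fun (x : i.-tuple bool) (y : (m - i).-tuple bool) => g (x ++ y)) d.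

(* Rule 29 satisfies F^3 = F, so a finite perturbation of a configuration is
   only ever visible in a window of bounded width: SInv always holds.  For rule
   13 the pattern 01 is a wall that never changes.  If p_u is not constant it
   has walls on both sides of the perturbation, which nothing crosses, so SInv
   again always holds.  If u is constantly b, SInv holds exactly when x is
   constantly b.  Otherwise the rightmost cell of x differing from the
   background emits a signal moving right by two cells every two steps while
   leaving a wall behind, so the differences spread apart.  In every case
   SInv(xy) = all P x && all P y for some P, decided with two bits. *)

From Stdlib Require Import ZArith Lia ClassicalEpsilon.
From mathcomp Require Import all_boot zify.

Set Implicit Arguments.
Unset Strict Implicit.
Unset Printing Implicit Defensive.

Local Open Scope Z_scope.

Definition agree_off (a b : Z) (p q : config) : Prop :=
  forall i, i < a \/ b <= i -> p i = q i.

Definition diff_bounded (N : nat) (p q : config) : Prop :=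
  exists w : Z, forall t : nat, exists a : Z, forall i : Z,
    eca_iter N t p i <> eca_iter N t q i -> a <= i < a + w.

Lemma SInvE N u x : SInv N u x = diff_bounded N (periodic u) (patch u x).
Proof. by []. Qed.

Lemma eca_iterS N t (x : config) : eca_iter N t.+1 x = eca N (eca_iter N t x).
Proof. by []. Qed.

Lemma eca_iter_ext N t (x y : config) : (forall i, x i = y i) ->
  forall i, eca_iter N t x i = eca_iter N t y i.
Proof.
move=> exy; elim: t => [|t IH] i; first exact: exy.
by rewrite !eca_iterS /eca !IH.
Qed.

Lemma agree_off_widen a b a' b' p q :
  a' <= a -> b <= b' -> agree_off a b p q -> agree_off a' b' p q.
Proof. by move=> ha hb pq i hi; apply: pq; lia. Qed.

Lemma agree_off_eca N a b p q :
  agree_off a b p q -> agree_off (a - 1) (b + 1) (eca N p) (eca N q).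
Proof. by move=> pq i hi; rewrite /eca !pq //; lia. Qed.

Lemma agree_off_iter N t a b p q : agree_off a b p q ->
  agree_off (a - Z.of_nat t) (b + Z.of_nat t) (eca_iter N t p) (eca_iter N t q).
Proof.
move=> pq; elim: t => [|t IH]; first by apply: agree_off_widen pq; lia.
by apply: agree_off_widen (agree_off_eca N IH); lia.
Qed.

Lemma diff_bounded_agree_off N p q w :
  (forall t, exists a, agree_off a (a + w) (eca_iter N t p) (eca_iter N t q)) ->
  diff_bounded N p q.
Proof.
move=> h; exists w => t; have [a pq] := h t; exists a => i neq.
have out : ~ (i < a \/ a + w <= i) := fun hi => neq (pq i hi).
lia.
Qed.

Lemma diff_bounded_iter N s p q : diff_bounded N p q ->
  diff_bounded N (eca_iter N s p) (eca_iter N s q).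
Proof.
move=> [w bw]; exists w => t; have [a ha] := bw (t + s)%N.
by exists a => i; rewrite /eca_iter -!iterD; apply: ha.
Qed.

Lemma periodic_addZ u i m :
  periodic u (i + m * Z.of_nat (size u)) = periodic u i.
Proof. by rewrite /periodic Z_mod_plus_full. Qed.

Lemma periodic_nat u k : (k < size u)%N -> periodic u (Z.of_nat k) = nth false u k.
Proof. by move=> ku; rewrite /periodic Z.mod_small ?Nat2Z.id //; lia. Qed.

Lemma periodic_const (u : seq bool) (b : bool) :
  u <> [::] -> all (pred1 b) u -> forall i, periodic u i = b.
Proof.
move=> u0 ub i; have su : (0 < size u)%N by case: u u0 {ub}.
have ilt : (Z.to_nat (i mod Z.of_nat (size u)) < size u)%N.
  by have := Z.mod_pos_bound i (Z.of_nat (size u)); lia.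
exact/eqP/(all_nthP false ub).
Qed.

Lemma patch_nat u x k : (k < size x)%N -> patch u x (Z.of_nat k) = nth false x k.
Proof.
move=> kx; rewrite /patch ifT ?Nat2Z.id //.
by apply/andP; split; [apply/Z.leb_le | apply/Z.ltb_lt]; lia.
Qed.

Lemma patch_agree_off u x : agree_off 0 (Z.of_nat (size x)) (periodic u) (patch u x).
Proof.
by move=> i hi; rewrite /patch; case: ifP => // /andP [/Z.leb_le ? /Z.ltb_lt ?]; lia.
Qed.

Lemma eca29_idem3 x i : eca 29 (eca 29 (eca 29 x)) i = eca 29 x i.
Proof.
rewrite /eca ?Z.sub_add ?Z.add_simpl_r.
move: (x (i-1-1-1)) (x (i-1-1)) (x (i-1)) (x i) (x (i+1)) (x (i+1+1)) (x (i+1+1+1)).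
by do 7!case.
Qed.

Lemma eca29_iter_le2 t :
  exists2 s, (s <= 2)%N & forall x i, eca_iter 29 t x i = eca_iter 29 s x i.
Proof.
elim/ltn_ind: t => -[|[|[|t]]] IH; [by exists 0%N | by exists 1%N | by exists 2%N |].
have [s s2 E] := IH t.+1 (ltnW (ltnSn _)).
by exists s => // x i; rewrite -E !eca_iterS eca29_idem3.
Qed.

Lemma diff_bounded29 a b p q : agree_off a b p q -> diff_bounded 29 p q.
Proof.
move=> pq; apply: (@diff_bounded_agree_off _ _ _ (b - a + 4)) => t.
have [s s2 E] := eca29_iter_le2 t.
exists (a - 2) => i hi; rewrite !E.
by apply: (agree_off_iter 29 (t := s) pq); lia.
Qed.

Lemma SInv29 u x : SInv 29 u x.
Proof. by rewrite SInvE; exact: diff_bounded29 (@patch_agree_off u x). Qed.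

Definition wall (x : config) j := x j = false /\ x (j + 1) = true.

Definition last_one (x : config) R := x R = true /\ forall i, R < i -> x i = false.

Lemma eca13E x i : eca 13 x i = ~~ x (i - 1) && (x i || ~~ x (i + 1)).
Proof. by rewrite /eca; case: (x (i - 1)); case: (x i); case: (x (i + 1)). Qed.

Lemma eca13_wall x j : wall x j -> wall (eca 13 x) j.
Proof. by case=> x0 x1; split; rewrite eca13E ?Z.add_simpl_r x0 x1 ?andbF. Qed.

Lemma eca13_iter_wall t x j : wall x j -> wall (eca_iter 13 t x) j.
Proof. by move=> w; elim: t => // t; rewrite eca_iterS; apply: eca13_wall. Qed.

Lemma agree_off_eca13_walls jL jR p q : wall p jL -> wall p jR ->
  agree_off (jL + 2) jR p q -> agree_off (jL + 2) jR (eca 13 p) (eca 13 q).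
Proof.
move=> wpL wpR pq.
have wall_q j : wall p j -> j + 1 < jL + 2 \/ jR <= j -> wall q j.
  by case=> p0 p1 hj; split; rewrite -pq //; lia.
have [[_ pL1] [_ qL1]] := (eca13_wall wpL, eca13_wall (wall_q jL wpL ltac:(lia))).
have [[pR0 _] [qR0 _]] := (eca13_wall wpR, eca13_wall (wall_q jR wpR ltac:(lia))).
move=> i hi; have [->|iL] := Z.eq_dec i (jL + 1); first by rewrite pL1 qL1.
have [->|iR] := Z.eq_dec i jR; first by rewrite pR0 qR0.
by apply: (agree_off_eca 13 pq); lia.
Qed.

Lemma diff_bounded13_walls jL jR p q : wall p jL -> wall p jR ->
  agree_off (jL + 2) jR p q -> diff_bounded 13 p q.
Proof.
move=> wL wR pq; apply: (@diff_bounded_agree_off _ _ _ (jR - (jL + 2))) => t.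
exists (jL + 2); rewrite (_ : jL + 2 + _ = jR); last by lia.
elim: t => // t IH; rewrite !eca_iterS.
by apply: agree_off_eca13_walls IH; apply: eca13_iter_wall.
Qed.

Lemma wall_of_rise (p : config) z n :
  p z = false -> p (z + Z.of_nat n) = true -> exists j, wall p j.
Proof.
elim: n z => [|n IH] z p0 pn; first by move: pn; rewrite Z.add_0_r p0.
case p1: (p (z + 1)); first by exists z.
by apply: (IH (z + 1)) => //; rewrite -pn; congr p; lia.
Qed.

Lemma periodic_wall u : false \in u -> true \in u -> exists j, wall (periodic u) j.
Proof.
move=> fu tu.
have kf : (index false u < size u)%N by rewrite index_mem.
have kt : (index true u < size u)%N by rewrite index_mem.
apply: (@wall_of_rise _ (Z.of_nat (index false u))
                       (index true u + size u - index false u)).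
  by rewrite periodic_nat //; apply: nth_index.
rewrite (_ : _ + _ = Z.of_nat (index true u) + 1 * Z.of_nat (size u)); last by lia.
by rewrite periodic_addZ periodic_nat //; apply: nth_index.
Qed.

Lemma SInv13_mixed u x : false \in u -> true \in u -> SInv 13 u x.
Proof.
move=> fu tu; have [j [pj0 pj1]] := periodic_wall fu tu.
have su : (0 < size u)%N by case: (u) fu.
set L := Z.of_nat (size u).
have wall_shift m : wall (periodic u) (j + m * L).
  rewrite /wall periodic_addZ (_ : j + m * L + 1 = j + 1 + m * L); last by lia.
  by rewrite periodic_addZ.
pose m := Z.abs j + Z.of_nat (size x) + 2.
have mL : m <= m * L.
  by rewrite -{1}(Z.mul_1_r m); apply: Z.mul_le_mono_nonneg_l; lia.
rewrite SInvE; apply: (diff_bounded13_walls (wall_shift (- m)) (wall_shift m)).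
rewrite Z.mul_opp_l; apply: agree_off_widen (@patch_agree_off u x);
  move: mL; rewrite /m; set K := _ * L; lia.
Qed.

Lemma eca13_const x c : (forall i, x i = c) -> forall i, eca 13 x i = ~~ c.
Proof. by move=> xc i; rewrite eca13E !xc; case: (c). Qed.

Lemma eca13_last_zero q R : q R = false -> (forall i, R < i -> q i = true) ->
  last_one (eca 13 q) (R + 1).
Proof.
move=> q0 q1; split=> [|i hi]; rewrite eca13E.
  by rewrite Z.add_simpl_r q0 q1 //; lia.
by rewrite q1 //; lia.
Qed.

Lemma eca13_last_one2 q R : last_one q R ->
  last_one (eca 13 (eca 13 q)) (R + 2) /\ wall (eca 13 (eca 13 q)) (R + 1).
Proof.
move=> [q1 q0].
have fq0 : eca 13 q (R + 1) = false by rewrite eca13E Z.add_simpl_r q1.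
have fq1 i : R + 1 < i -> eca 13 q i = true.
  by move=> hi; rewrite eca13E !q0 //; lia.
have [ffq1 ffq0] := eca13_last_zero fq0 fq1.
have -> : R + 2 = R + 1 + 1 by lia.
do !split=> //; rewrite eca13E fq0 (fq1 (R + 1 + 1)) ?andbF //; lia.
Qed.

Lemma not_diff_bounded13 p q R :
  (forall i, p i = false) -> last_one q R -> ~ diff_bounded 13 p q.
Proof.
move=> p0 q1.
have front k : (forall i, eca_iter 13 (2 * k) p i = false) /\
    last_one (eca_iter 13 (2 * k) q) (R + 2 * Z.of_nat k).
  elim: k => [|k [pk qk]]; first by rewrite Z.add_0_r.
  rewrite (_ : (2 * k.+1 = (2 * k).+2)%N) ?Nat2Z.inj_succ; last by lia.
  split; first by move=> i; rewrite !eca_iterS (eca13_const (eca13_const pk)).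
  rewrite (_ : R + 2 * Z.succ _ = R + 2 * Z.of_nat k + 2); last by lia.
  exact: (eca13_last_one2 qk).1.
have stay n : eca_iter 13 (n + 2) q (R + 2) = true.
  have [_ w] := eca13_last_one2 q1.
  have -> : R + 2 = R + 1 + 1 by lia.
  by rewrite /eca_iter iterD; apply: (eca13_iter_wall n w).2.
move=> [w bw]; pose k := (Z.to_nat w).+1.
have [a ha] := bw (2 * k)%N; have [pk [qk _]] := front k.
have d1 : a <= R + 2 < a + w.
  apply: ha; rewrite pk (_ : (2 * k = 2 * k.-1 + 2)%N) ?stay //; lia.
have d2 : a <= R + 2 * Z.of_nat k < a + w by apply: ha; rewrite pk qk.
lia.
Qed.

Lemma last_nth_neq (b : bool) (x : seq bool) : ~~ all (pred1 b) x ->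
  exists2 R, (R < size x)%N & nth false x R = ~~ b /\
    forall k, (R < k < size x)%N -> nth false x k = b.
Proof.
elim: x => [|c x IH] //=; case xb: (all (pred1 b) x); rewrite ?andbT /= => cb.
  exists 0%N => //; split; first by move: cb; case: (c); case: (b).
  by case=> // k /= kx; apply/eqP/(all_nthP false xb).
have [R Rx [xR xgt]] := IH (negbT xb).
by exists R.+1 => //; split=> // -[] // k.
Qed.

Lemma patch_last_flip (u x : seq bool) (b : bool) :
  u <> [::] -> all (pred1 b) u -> ~~ all (pred1 b) x ->
  exists R, patch u x R = ~~ b /\ forall i, R < i -> patch u x i = b.
Proof.
move=> u0 ub xb; have [R Rx [xR xgt]] := last_nth_neq xb.
exists (Z.of_nat R); split; first by rewrite patch_nat.
move=> i hi; have [ix|xi] := Z.lt_ge_cases i (Z.of_nat (size x)).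
  by rewrite -(Z2Nat.id i) ?patch_nat ?xgt //; lia.
by rewrite -(@patch_agree_off u x); [apply: periodic_const | right].
Qed.

Lemma not_SInv13_const (u x : seq bool) (b : bool) :
  u <> [::] -> all (pred1 b) u -> ~~ all (pred1 b) x -> ~ SInv 13 u x.
Proof.
move=> u0 ub xb; have [R [qR qgt]] := patch_last_flip u0 ub xb.
have pb := periodic_const u0 ub; rewrite SInvE.
case: b {ub xb} pb qR qgt => pb qR qgt; last exact: not_diff_bounded13 pb (conj qR qgt).
move/(diff_bounded_iter 1); apply: not_diff_bounded13 (eca13_last_zero qR qgt).
exact: eca13_const pb.
Qed.

Lemma SInv_const N (u x : seq bool) (b : bool) :
  u <> [::] -> all (pred1 b) u -> all (pred1 b) x -> SInv N u x.
Proof.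
move=> u0 ub xb; have pb := periodic_const u0 ub.
have pq i : periodic u i = patch u x i.
  have [ix|xi] := Z.lt_ge_cases i 0; first by rewrite (@patch_agree_off u x) //; left.
  have [ixs|xsi] := Z.lt_ge_cases i (Z.of_nat (size x)); last first.
    by rewrite (@patch_agree_off u x) //; right.
  rewrite pb -(Z2Nat.id i) ?patch_nat //; last by lia.
  by apply/esym/eqP/(all_nthP false xb); lia.
by exists 0 => t; exists 0 => i; rewrite (eca_iter_ext N t pq).
Qed.

Local Close Scope Z_scope.

Lemma SInv_bP N u x : reflect (SInv N u x) (SInv_b N u x).
Proof. by rewrite /SInv_b; case: excluded_middle_informative => h; constructor. Qed.

Lemma mixed_or_const (u : seq bool) :
  (false \in u) && (true \in u) \/ exists b : bool, all (pred1 b) u.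
Proof.
case fu: (false \in u); case tu: (true \in u); [by left | right..].
- by exists false; apply/allP => -[] //; rewrite tu.
- by exists true; apply/allP => -[] //; rewrite fu.
- by exists true; apply/allP => -[]; rewrite ?fu ?tu.
Qed.

Lemma SInv_b_all N u : N = 13 \/ N = 29 -> u <> [::] ->
  exists P : pred bool, forall x, SInv_b N u x = all P x.
Proof.
move=> hN u0.
have inv_all M : (forall x, SInv M u x) ->
    exists P : pred bool, forall x, SInv_b M u x = all P x.
  by move=> inv; exists predT => x; rewrite all_predT; apply/SInv_bP.
case: hN => ->; last by apply: inv_all => x; apply: SInv29.
have [/andP [fu tu] | [b ub]] := mixed_or_const u.
  by apply: inv_all => x; apply: SInv13_mixed.
exists (pred1 b) => x; apply/SInv_bP/idP => [inv | xb]; last exact: SInv_const u0 ub xb.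
by apply/negPn/negP => xb; apply: (not_SInv13_const u0 ub xb).
Qed.

Lemma CC_le_ext X Y Z (h h' : X -> Y -> Z) d :
  (forall x y, h x y = h' x y) -> CC_le h d -> CC_le h' d.
Proof. by move=> hh' [P [dP runP]]; exists P; split=> // x y; rewrite runP. Qed.

Lemma CC_le_andb X Y (f : X -> bool) (g : Y -> bool) : CC_le (fun x y => f x && g y) 2.
Proof.
exists (NodeA f (NodeB g (Leaf _ _ true) (Leaf _ _ false)) (Leaf _ _ false)).
by split=> // x y /=; case: (f x); case: (g y).
Qed.

Theorem mainTheorem5 (N : nat) (hN : N = 13 \/ N = 29)
  (u : seq bool) (hu : u <> [::]) :
  exists c : nat, forall n : nat, CC_len_le n (SInv_b N u) c.
Proof.
have [P SInvP] := SInv_b_all hN hu.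
exists 2 => n i _.
apply: CC_le_ext (CC_le_andb (fun x : i.-tuple bool => all P x)
                             (fun y : (n - i).-tuple bool => all P y)) => x y.
by rewrite SInvP all_cat.
Qed.
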